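(* Let $\Bbbk$ be an algebraically closed field of characteristic zero and let $\pi$ be a pyramid with row lengths $p_1\le\dots\le p_{m+n}$ (set $p_0=0$), with $|i|\in\{0,1\}$ the label of row $i$. For $2\le i\le m+n$ let $s_{i,i-1}$ be the left indentation of row $i-1$ relative to row $i$. Given $a_i^{(r)}\in\Bbbk$ for $1\le i\le m+n$ and $1\le r\le p_i-p_{i-1}$, there exist $b_{i,j}\in\Bbbk$ for $1\le i\le m+n$, $1\le j\le p_i$, such that $$b_{i,s_{i,i-1}+r}=b_{i-1,r}\quad\text{for }1\le r\le p_{i-1},$$ $$e_r\big((-1)^{|i|}b_{i,1},\dots,(-1)^{|i|}b_{i,p_i}\big)=(-1)^{r|i|}a_i^{(r)}\quad\text{for }1\le r\le p_i-p_{i-1},$$ where $e_r$ is the $r$-th elementary symmetric polynomial.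
   Context: A pyramid $\pi$ with row lengths $p_1\le\dots\le p_{m+n}$ is a diagram with rows $1,\dots,m+n$ numbered top to bottom, row $i$ consisting of $p_i$ consecutive boxes, such that every box not in the bottom row lies directly above a box of the row beneath. Each row is labelled ''$+$'' ($|i|=0$) or ''$-$'' ($|i|=1$), with $m$ rows of the first kind and $n$ of the second. The left indentation $s_{i,i-1}$ is the number of boxes of row $i$ lying strictly to the left of the leftmost box of row $i-1$. *)

From HB Require Import structures.
From mathcomp Require Import all_boot all_order all_algebra.
Set Implicit Arguments. Unset Strict Implicit. Unset Printing Implicit Defensive.
Import Order.TTheory GRing.Theory Num.Theory.
Local Open Scope ring_scope.

Definition elem_sym (R : comRingType) (r p : nat) (x : nat -> R) : R :=
  \sum_(A : {set 'I_p} | #|A| == r) \prod_(j in A) x j.+1.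

(* A pyramid with rows 1..N (top to bottom): row i has p i boxes occupying
   columns l i, l i + 1, ..., l i + p i - 1.  The pyramid condition (every box
   of row i-1 lies directly above a box of row i) reads
   l i <= l (i-1)  and  l (i-1) + p (i-1) <= l i + p i. *)
Definition is_pyramid (N : nat) (p l : nat -> nat) : Prop :=
  (forall i, (1 <= i <= N)%N -> (0 < p i)%N) /\
  (forall i, (2 <= i <= N)%N ->
     (l i <= l i.-1)%N /\ (l i.-1 + p i.-1 <= l i + p i)%N).

Definition indent (l : nat -> nat) (i : nat) : nat := (l i.-1 - l i)%N.

(* Encode row [i] by the generating polynomial [prod_j (1 + b_{i,j} X)],
   whose [r]-th coefficient is [e_r(b_{i,1}, ..., b_{i,p_i})], and fill the
   rows top to bottom.  The entries of row [i] lying under row [i-1] are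
   imposed and contribute a factor [Q] with [Q_0 = 1]; the remaining
   [d = p_i - p_{i-1}] entries form a factor [F] of degree at most [d] with
   [F_0 = 1].  Since [Q_0] is a unit, the coefficients [1..d] of [Q F] can be
   prescribed by choosing [F] one coefficient at a time, and over an
   algebraically closed field such an [F] splits as [prod (1 + y_j X)], which
   gives the free entries. *)

From mathcomp Require Import all_boot all_order all_algebra.
From mathcomp Require Import zify.
Import GRing.Theory.
Set Implicit Arguments. Unset Strict Implicit.
Local Open Scope ring_scope.

Definition elem_sym_genpoly (R : comNzRingType) (n : nat) (x : nat -> R) :
    {poly R} :=
  \prod_(j < n) ((x j.+1)%:P * 'X + 1).

Section GeneratingPolynomial.

Variable R : comNzRingType.
Implicit Types (x y : nat -> R) (m n : nat).

Lemma coef_elem_sym_genpoly r n x :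
  (elem_sym_genpoly n x)`_r = elem_sym r n x.
Proof.
rewrite /elem_sym_genpoly bigA_distr coef_sum /elem_sym.
rewrite (bigID (fun A : {set 'I_n} => #|A| == r)) /= [X in _ + X]big1 ?addr0.
  apply: eq_bigr => A /eqP <-.
  rewrite -big_mkcond /= big_split /= prodr_const -rmorph_prod /= coefCM.
  by rewrite coefXn eqxx mulr1.
move=> A /negbTE sizeA.
rewrite -big_mkcond /= big_split /= prodr_const -rmorph_prod /= coefCM.
by rewrite coefXn eq_sym sizeA mulr0.
Qed.

Lemma elem_sym_genpolyD m n x :
  elem_sym_genpoly (m + n) x
  = elem_sym_genpoly m x * elem_sym_genpoly n (fun j => x (m + j)%N).
Proof.
rewrite /elem_sym_genpoly big_split_ord /=; congr (_ * _).
by apply: eq_bigr => j _; rewrite addnS.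
Qed.

Lemma eq_elem_sym_genpoly n x y :
  (forall j, (1 <= j <= n)%N -> x j = y j) ->
  elem_sym_genpoly n x = elem_sym_genpoly n y.
Proof.
move=> eq_xy; rewrite /elem_sym_genpoly.
by apply: eq_bigr => j _; rewrite eq_xy ?ltn_ord.
Qed.

Lemma elem_sym_genpoly_coef0 n x : (elem_sym_genpoly n x)`_0 = 1.
Proof.
rewrite -horner_coef0 /elem_sym_genpoly horner_prod; apply: big1 => j _.
by rewrite hornerD hornerM hornerX mulr0 hornerC add0r.
Qed.

Lemma elem_sym_genpoly_zero n : elem_sym_genpoly n (fun=> 0 : R) = 1.
Proof. by rewrite /elem_sym_genpoly big1 // => j _; rewrite mul0r add0r. Qed.

End GeneratingPolynomial.

Lemma exists_poly_coef_mul (R : comNzRingType) (Q : {poly R}) (t : nat -> R)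
    d :
  Q`_0 = 1 ->
  exists F : {poly R}, [/\ (size F <= d.+1)%N, F`_0 = 1 &
    forall r, (1 <= r <= d)%N -> (Q * F)`_r = t r].
Proof.
move=> Q0; elim: d => [|d [F [sizeF F0 QF]]].
  by exists 1; split=> [||[]]; rewrite ?size_poly1 ?coef1.
pose c := t d.+1 - (Q * F)`_d.+1.
exists (F + c *: 'X^(d.+1)); split.
- rewrite (leq_trans (size_polyD _ _)) // geq_max (leq_trans sizeF) //.
  by rewrite (leq_trans (size_scale_leq _ _)) ?size_polyXn.
- by rewrite coefD coefZ coefXn mulr0 addr0.
move=> r /andP[r_gt0 r_le]; rewrite mulrDr -scalerAr coefD coefZ coefMXn.
have [r_lt | r_ge] := ltnP r d.+1; first by rewrite mulr0 addr0 QF ?r_gt0.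
have -> : r = d.+1 by apply/eqP; rewrite eqn_leq r_le r_ge.
by rewrite subnn Q0 mulr1 addrC subrK.
Qed.

Lemma XsubC_genfactor (K : fieldType) (z : K) :
  z != 0 -> 'X - z%:P = (- z)%:P * ((- z^-1)%:P * 'X + 1).
Proof.
move=> z_neq0.
by rewrite mulrDr mulr1 mulrA -polyCM mulrNN mulfV // mul1r polyCN.
Qed.

Lemma elem_sym_genpoly_closed (K : closedFieldType) (F : {poly K}) d :
  F`_0 = 1 -> (size F <= d.+1)%N -> exists y, F = elem_sym_genpoly d y.
Proof.
move=> F0 sizeF; have [rs defF] := closed_field_poly_normal F.
have F_neq0 : F != 0.
  by apply: contra_eq_neq F0 => ->; rewrite coef0 eq_sym oner_eq0.
have rs_neq0 z : z \in rs -> z != 0.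
  move=> rs_z; apply: contra_eq_neq F0 => z0.
  have : root F z by rewrite defF rootZ ?lead_coef_eq0 // root_prod_XsubC.
  by rewrite -horner_coef0 -z0 => /eqP ->; rewrite eq_sym oner_eq0.
pose s := [seq - z^-1 | z <- rs]; pose y j := s`_j.-1.
have defG :
    \prod_(z <- rs) ((- z^-1)%:P * 'X + 1) = elem_sym_genpoly (size s) y.
  rewrite (big_nth 0) big_mkord size_map /elem_sym_genpoly.
  by apply: eq_bigr => j _; rewrite /y /= (nth_map 0).
have defF1 : F = (F`_0)%:P * elem_sym_genpoly (size s) y.
  suff -> : F = (lead_coef F * \prod_(z <- rs) - z)%:P
                * elem_sym_genpoly (size s) y.
    by rewrite coefCM elem_sym_genpoly_coef0 mulr1.
  rewrite {1}defF -defG polyCM -mulrA mul_polyC rmorph_prod -big_split /=.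
  by congr (_ *: _); apply: eq_big_seq => z /rs_neq0 /XsubC_genfactor.
have size_s : (size s <= d)%N.
  move: sizeF; rewrite defF size_scale ?lead_coef_eq0 //.
  by rewrite size_prod_XsubC size_map.
exists y.
rewrite -(subnKC size_s) elem_sym_genpolyD {1}defF1 F0 mul1r -[LHS]mulr1.
congr (_ * _); rewrite -(elem_sym_genpoly_zero K (d - size s)).
apply: eq_elem_sym_genpoly => -[|j] // _.
by rewrite /y nth_default // addnS leq_addr.
Qed.

Lemma elem_sym_completion (K : closedFieldType) (c : K) (s q n : nat)
    (v t : nat -> K) :
  c != 0 -> (s + q <= n)%N ->
  exists w : nat -> K,
    (forall r, (1 <= r <= q)%N -> w (s + r)%N = v r) /\
    (forall r, (1 <= r <= n - q)%N -> elem_sym r n (fun j => c * w j) = t r).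
Proof.
move=> c_neq0 sq_le_n; pose e := (n - s - q)%N.
have [F [sizeF F0 QF]] :=
  exists_poly_coef_mul t (s + e) (elem_sym_genpoly_coef0 q (fun j => c * v j)).
have [y defF] := elem_sym_genpoly_closed F0 sizeF.
pose w j := if (j <= s)%N then c^-1 * y j
            else if (j <= s + q)%N then v (j - s)%N else c^-1 * y (j - q)%N.
have w_mid j : (1 <= j <= q)%N -> w (s + j)%N = v j.
  by move=> j_range; rewrite /w ifN ?ifT ?addKn //; lia.
exists w; split=> // r r_range; rewrite -coef_elem_sym_genpoly.
have -> : n = (s + q + e)%N by lia.
rewrite !elem_sym_genpolyD.
rewrite (@eq_elem_sym_genpoly _ s _ y); last first.
  by move=> j j_range; rewrite /w ifT ?mulVKf //; lia.
rewrite (@eq_elem_sym_genpoly _ q _ (fun j => c * v j)); last first.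
  by move=> j /w_mid ->.
rewrite (@eq_elem_sym_genpoly _ e _ (fun j => y (s + j)%N)); last first.
  move=> j j_range; rewrite /w ifN ?ifN; try lia.
  by rewrite mulVKf // addnAC addnK.
by rewrite [_ s y * _]mulrC -mulrA -elem_sym_genpolyD -defF QF //; lia.
Qed.

Section PyramidFilling.

Variables (k : closedFieldType) (N : nat) (p l : nat -> nat).
Variables (lab : nat -> bool) (a : nat -> nat -> k).
Hypotheses (pyr : is_pyramid N p l) (p0 : p 0%N = 0%N).

Lemma indent_add_le i :
  (2 <= i <= N)%N -> (indent l i + p i.-1 <= p i)%N.
Proof.
by move=> i_range; have [_ /(_ i i_range)] := pyr; rewrite /indent; lia.
Qed.

Lemma pyramid_filling n : (n <= N)%N ->
  exists b : nat -> nat -> k,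
    (forall i, (2 <= i <= n)%N -> forall r, (1 <= r <= p i.-1)%N ->
        b i (indent l i + r)%N = b i.-1 r) /\
    (forall i, (1 <= i <= n)%N -> forall r, (1 <= r <= p i - p i.-1)%N ->
        elem_sym r (p i) (fun j => (-1) ^+ lab i * b i j)
        = (-1) ^+ (r * lab i) * a i r).
Proof.
elim: n => [_ | n IHn n_lt_N].
  by exists (fun _ _ => 0); split=> i; lia.
have [b [b_glued b_sym]] := IHn (ltnW n_lt_N).
(* Row 1 has no row above it, so its offset is irrelevant ([p 0 = 0]). *)
pose s := if n == 0%N then 0%N else indent l n.+1.
have fits : (s + p n <= p n.+1)%N.
  rewrite /s; case: eqP => [-> | n_neq0]; first by rewrite p0.
  by apply: indent_add_le; lia.
have [w [w_glued w_sym]] := elem_sym_completion (b n)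
  (fun r => (-1) ^+ (r * lab n.+1) * a n.+1 r)
  (negbT (signr_eq0 _ (lab n.+1))) fits.
exists (fun i => if i == n.+1 then w else b i); split=> i i_range r r_range.
  have [i_eq | i_neq] := eqVneq i n.+1; last by rewrite ifN ?b_glued //; lia.
  subst i; have n_neq0 : (n != 0)%N by lia.
  rewrite /= (ltn_eqF (ltnSn n)).
  by move: w_glued; rewrite /s (negbTE n_neq0); apply.
have [i_eq | i_neq] := eqVneq i n.+1; first by subst i; apply: w_sym.
by apply: b_sym => //; lia.
Qed.

End PyramidFilling.

Theorem mainTheorem9 (k : closedFieldType) (hchar : [pchar k] =i pred0)
  (N : nat) (p l : nat -> nat) (lab : nat -> bool)
  (hpyr : is_pyramid N p l) (hp0 : p 0%N = 0%N)
  (a : nat -> nat -> k) :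
  exists b : nat -> nat -> k,
    (forall i, (2 <= i <= N)%N -> forall r, (1 <= r <= p i.-1)%N ->
        b i (indent l i + r)%N = b i.-1 r) /\
    (forall i, (1 <= i <= N)%N -> forall r, (1 <= r <= p i - p i.-1)%N ->
        elem_sym r (p i) (fun j => (-1) ^+ lab i * b i j)
        = (-1) ^+ (r * lab i) * a i r).
Proof. exact: (pyramid_filling lab a hpyr hp0 (leqnn N)). Qed.
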